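(* Let $F$ be a saturated minimally unsatisfiable clause-set, $v$ a singular variable for $F$, and $F' := \mathrm{DP}_v(F)$. 1. For all literals $x$, $\mathrm{ldeg}_{F'}(x)\le\mathrm{ldeg}_F(x)$. 2. Consequently, if $w\neq v$ is a singular variable for $F$, then $w$ is also singular for $F'$.
   Context: Literals are variables $v$ and complements $\overline{v}$; a clause is a finite set of literals with no complementary pair; a clause-set is a finite set of clauses; $\mathrm{var}(F)$ is the set of variables of $F$; $\mathrm{ldeg}_F(x)$ is the number of clauses of $F$ containing literal $x$. $\mathrm{DP}_v(F) := \{C \in F : v \notin \mathrm{var}(C)\} \cup \{(C \cup D)\setminus\{v,\overline{v}\} : C, D \in F,\ C \cap \overline{D} = \{v\}\}$. A minimally unsatisfiable $F$ is saturated if for every $C \in F$ and every literal $y$ with $\mathrm{var}(y) \in \mathrm{var}(F)\setminus \mathrm{var}(C)$, the clause-set $(F\setminus\{C\})\cup\{C\cup\{y\}\}$ is satisfiable. A variable $v$ is singular for $F$ if $\min(\mathrm{ldeg}_F(v),\mathrm{ldeg}_F(\overline{v}))=1$. *)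

From mathcomp Require Import all_boot all_order.
From mathcomp Require Import finmap.
Set Implicit Arguments. Unset Strict Implicit. Unset Printing Implicit Defensive.
Local Open Scope fset_scope.

Definition var := nat.
Definition lit := (nat * bool)%type.
Definition pos (v : var) : lit := (v, true).
Definition neg (v : var) : lit := (v, false).
Definition compl (x : lit) : lit := (x.1, ~~ x.2).
Definition varl (x : lit) : var := x.1.

Definition clause := {fset lit}.
Definition clauseset := {fset clause}.

Definition clause_ok (C : clause) : Prop := forall x, x \in C -> compl x \notin C.
Definition clauseset_ok (F : clauseset) : Prop := forall C, C \in F -> clause_ok C.

Definition varC (C : clause) : {fset var} := [fset varl x | x in C].
Definition varF (F : clauseset) : {fset var} := \bigcup_(C <- F) varC C.

Definition ldeg (F : clauseset) (x : lit) : nat := #|` [fset C in F | x \in C]|.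

Definition sat_lit (a : var -> bool) (x : lit) : bool := a x.1 == x.2.
Definition sat_clause (a : var -> bool) (C : clause) : Prop :=
  exists2 x, x \in C & sat_lit a x.
Definition satisfiable (F : clauseset) : Prop :=
  exists a : var -> bool, forall C, C \in F -> sat_clause a C.

Definition minunsat (F : clauseset) : Prop :=
  clauseset_ok F /\ ~ satisfiable F /\
  (forall C, C \in F -> satisfiable (F `\ C)).

Definition saturated (F : clauseset) : Prop :=
  minunsat F /\
  forall C y, C \in F -> varl y \in varF F -> varl y \notin varC C ->
    satisfiable ((F `\ C) `|` [fset C `|` [fset y]]).

Definition complC (D : clause) : clause := [fset compl y | y in D].

Definition DP (v : var) (F : clauseset) : clauseset :=
  [fset C in F | v \notin varC C] `|`
  [fset (C `|` D) `\` [fset pos v; neg v] | C in F, D in F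
     & C `&` complC D == [fset pos v]].

Definition singular (v : var) (F : clauseset) : Prop :=
  minn (ldeg F (pos v)) (ldeg F (neg v)) = 1%N.

(* Let (v,b) be the literal of the singular variable occurring in a single
   clause C0.  Saturation forces C0 minus (v,b) into every clause D that
   contains the complementary literal: otherwise some literal y of C0 can be
   made true by an assignment satisfying every clause but D, and switching v
   to ~~b then satisfies all of F.  Hence every resolvent on v is just D with
   its v-literal removed, so DP_v(F) is the image of F under the removal of
   v-literals, and literal degrees cannot grow.  Conversely every literal over
   another variable that occurs in F survives in some clause of DP_v(F), so a
   variable singular in F keeps both literal degrees positive, with minimum
   still 1. *)
From mathcomp Require Import all_boot all_order.
From mathcomp Require Import finmap zify.
Set Implicit Arguments.
Unset Strict Implicit.
Unset Printing Implicit Defensive.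
Local Open Scope fset_scope.

Notation vlits v := [fset pos v; neg v].

Lemma in_fset_sep (T : choiceType) (A : {fset T}) (P : pred T) x :
  (x \in [fset y in A | P y]) = (x \in A) && P x.
Proof. by rewrite !inE. Qed.

Lemma complK : involutive compl.
Proof. by case=> u c; rewrite /compl /= negbK. Qed.

Lemma in_complC x D : (x \in complC D) = (compl x \in D).
Proof.
apply/imfsetP/idP => [[y yD ->]|xD]; first by rewrite complK.
by exists (compl x); rewrite ?complK.
Qed.

Lemma lit_var_cases (v : var) (c : bool) (z : lit) :
  varl z = v -> z = (v, c) \/ z = (v, ~~ c).
Proof. by case: z => u d /= ->; case: c; case: d; [left|right|right|left]. Qed.
Arguments lit_var_cases {v} c {z}.

Lemma compl_of_same_var x y : varl x = varl y -> x != y -> y = compl x.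
Proof.
case: x => u c /= xy; have [->|->] := lit_var_cases c (esym xy); last by [].
by rewrite eqxx.
Qed.

Lemma varl_in_varC C x : x \in C -> varl x \in varC C.
Proof. by move=> xC; apply/imfsetP; exists x. Qed.

Lemma sat_lit_compl a x : sat_lit a (compl x) = ~~ sat_lit a x.
Proof. by rewrite /sat_lit /=; case: (a x.1); case: x.2. Qed.

Lemma notin_vlits v x : varl x != v -> x \notin vlits v.
Proof. by apply: contra; rewrite !inE => /orP[] /eqP ->. Qed.

Lemma fsetD_vlits_id v E : v \notin varC E -> E `\` vlits v = E.
Proof.
move=> vE; apply/fsetP => z; rewrite in_fsetD.
case zE: (z \in E); rewrite ?andbF ?andbT //.
by apply: notin_vlits; apply: contraNneq vE => <-; apply: varl_in_varC.
Qed.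

Lemma clash_sym C D x :
  C `&` complC D = [fset x] -> D `&` complC C = [fset compl x].
Proof.
move=> CD; apply/fsetP => y; rewrite in_fsetI in_complC in_fset1 andbC.
have := in_fsetI C (complC D) (compl y).
rewrite CD in_fset1 in_complC complK => <-.
by apply/eqP/eqP => [<-|->]; rewrite complK.
Qed.

Lemma resolvent_in_DP F v b C D : C \in F -> D \in F ->
  C `&` complC D = [fset (v, b)] -> (C `|` D) `\` vlits v \in DP v F.
Proof.
move=> CF DF; rewrite /DP in_fsetU; case: b => clash; apply/orP; right.
  by apply/imfset2P; exists C => //; exists D; rewrite // !inE DF clash eqxx.
apply/imfset2P; exists D => //; exists C.
  by rewrite !inE CF (clash_sym clash) eqxx.
by rewrite fsetUC.
Qed.

Lemma unsat_falsifies_rest F D a : ~ satisfiable F ->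
  (forall G, G \in F -> G != D -> sat_clause a G) -> ~ sat_clause a D.
Proof.
move=> unsat rest aD; apply: unsat; exists a => G GF.
by case: (eqVneq G D) => [->|GD] //; apply: rest.
Qed.

(* The two ways of making y true while sacrificing only D: minimality when
   compl y is in D, saturation (adding y to D) when var y is new to D. *)
Lemma saturated_extend_lit F D y : saturated F -> D \in F -> y \notin D ->
  varl y \in varF F ->
  exists a, (forall G, G \in F -> G != D -> sat_clause a G) /\ sat_lit a y.
Proof.
move=> [[_ [unsat minimal]] sat] DF yD yF.
case: (boolP (compl y \in D)) => cyD.
  have [a aFD] := minimal D DF.
  have rest G : G \in F -> G != D -> sat_clause a G.
    by move=> GF GD; apply: aFD; rewrite in_fsetD1 GD GF.
  exists a; split => //; apply/negPn/negP => ay.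
  apply: (unsat_falsifies_rest unsat rest).
  by exists (compl y); rewrite ?sat_lit_compl.
have yvD : varl y \notin varC D.
  apply/imfsetP => -[z zD yz]; have yz' : y != z by apply: contraNneq yD => ->.
  by move: cyD; rewrite -(compl_of_same_var yz yz') zD.
have [a aF] := sat D y DF yF yvD.
have rest G : G \in F -> G != D -> sat_clause a G.
  by move=> GF GD; apply: aF; rewrite in_fsetU in_fsetD1 GD GF.
exists a; split => //.
have [|z] := aF (D `|` [fset y]); first by rewrite in_fsetU in_fset1 eqxx orbT.
rewrite in_fsetU in_fset1 => /orP[zD az|/eqP-> //].
by case: (unsat_falsifies_rest unsat rest); exists z.
Qed.

Section SingularLiteral.

Variables (F : clauseset) (v : var) (b : bool) (C0 : clause).
Hypothesis satF : saturated F.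
Hypothesis C0F : C0 \in F.
Hypothesis vb_C0 : (v, b) \in C0.
Hypothesis vb_only_C0 : forall G, G \in F -> (v, b) \in G -> G = C0.

Lemma clause_okF G : G \in F -> clause_ok G.
Proof. by case: satF => -[ok _] _; apply: ok. Qed.

Lemma singular_clause_sub D y : D \in F -> (v, ~~ b) \in D ->
  y \in C0 -> y != (v, b) -> y \in D.
Proof.
move=> DF nvb_D yC0 y_vb.
have unsat : ~ satisfiable F by case: satF => -[_ []].
have yv : varl y != v.
  apply/eqP => yv; have := clause_okF C0F vb_C0.
  have -> : compl (v, b) = y by rewrite (@compl_of_same_var (v, b) y) // eq_sym.
  by rewrite yC0.
apply/idPn => yD.
have yF : varl y \in varF F.
  by apply/bigfcupP; exists C0; rewrite ?C0F ?varl_in_varC.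
have [a [rest ay]] := saturated_extend_lit satF DF yD yF.
apply: unsat; exists (fun u => if u == v then ~~ b else a u) => G GF.
case: (boolP ((v, ~~ b) \in G)) => [nvb_G|nvb_G].
  by exists (v, ~~ b); rewrite // /sat_lit /= eqxx.
case: (eqVneq G C0) => [->|GC0].
  by exists y; rewrite // /sat_lit /= (negbTE yv).
have [|z zG az] := rest G GF; first by apply: contraNneq nvb_G => ->.
exists z; rewrite // /sat_lit; case: (eqVneq z.1 v) => [zv|//].
have [ez|ez] := lit_var_cases b zv; rewrite ez in zG.
  by case/eqP: GC0; apply: vb_only_C0.
by rewrite zG in nvb_G.
Qed.

Lemma clash_C0 D : D \in F -> (v, ~~ b) \in D ->
  C0 `&` complC D = [fset (v, b)].
Proof.
move=> DF nvb_D; apply/fsetP => w; rewrite in_fsetI in_complC in_fset1.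
case: (eqVneq w (v, b)) => [->|w_vb]; first by rewrite vb_C0.
apply/negbTE/andP => -[wC0 cwD].
by have := clause_okF DF (singular_clause_sub DF nvb_D wC0 w_vb); rewrite cwD.
Qed.

Lemma resolvent_C0 D : D \in F -> (v, ~~ b) \in D ->
  (C0 `|` D) `\` vlits v = D `\` vlits v.
Proof.
move=> DF nvb_D; apply/fsetP => z; rewrite !in_fsetD.
case: (boolP (z \in vlits v)) => //= zv; rewrite in_fsetU.
apply/orP/idP => [[zC0|//]|]; last by right.
apply: singular_clause_sub zC0 _ => //.
by apply: contraNneq zv => ->; case: (b); rewrite !inE eqxx ?orbT.
Qed.

Lemma DP_clause_restrict E : E \in DP v F ->
  exists2 G, G \in F & E = G `\` vlits v.
Proof.
rewrite /DP in_fsetU => /orP[|].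
  by rewrite inE => /andP[EF vE]; exists E; rewrite ?fsetD_vlits_id.
case/imfset2P => C CF [D]; rewrite inE => /andP[DF /eqP clash] ->.
have : pos v \in C `&` complC D by rewrite clash in_fset1.
rewrite in_fsetI in_complC => /andP[pvC nvD].
case: b vb_only_C0 resolvent_C0 => only res.
  by exists D; rewrite // (only C CF pvC) res.
by exists C; rewrite // (only D DF nvD) fsetUC res.
Qed.

Lemma ldeg_DP_le x : ldeg (DP v F) x <= ldeg F x.
Proof.
have sub : [fset E in DP v F | x \in E] `<=`
    [fset G `\` vlits v | G in [fset C in F | x \in C]].
  apply/fsubsetP => E; rewrite in_fset_sep => /andP[EDP].
  have [G GF ->] := DP_clause_restrict EDP.
  rewrite in_fsetD => /andP[_ xG]; apply/imfsetP.
  by exists G; rewrite // in_fset_sep GF.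
apply: leq_trans (fsubset_leq_card sub) _; exact: leq_imfset_card.
Qed.

Lemma ldeg_DP_gt0 D0 x : D0 \in F -> (v, ~~ b) \in D0 ->
  varl x != v -> 0 < ldeg F x -> 0 < ldeg (DP v F) x.
Proof.
move=> D0F nvb_D0 xv; rewrite /ldeg !cardfs_gt0 => /fset0Pn[G].
rewrite in_fset_sep => /andP[GF xG].
suff [E EDP xE] : exists2 E, E \in DP v F & x \in E.
  by apply/fset0Pn; exists E; rewrite in_fset_sep EDP.
have xU D : G `<=` C0 `|` D -> (C0 `|` D) `\` vlits v \in DP v F ->
    exists2 E, E \in DP v F & x \in E.
  move=> GD EDP; exists ((C0 `|` D) `\` vlits v) => //.
  by rewrite in_fsetD notin_vlits // (fsubsetP GD).
case: (boolP (v \in varC G)) => [/imfsetP[z zG vz]|vG]; last first.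
  by exists G; rewrite // /DP in_fsetU !inE GF vG.
have [ez|ez] := lit_var_cases b (esym vz); rewrite ez in zG.
  apply: (xU D0); first by rewrite (vb_only_C0 GF zG) fsubsetUl.
  by apply: resolvent_in_DP; rewrite // clash_C0.
apply: (xU G); first exact: fsubsetUr.
by apply: resolvent_in_DP; rewrite // clash_C0.
Qed.

End SingularLiteral.

Lemma ldeg_eq1_clause F x : ldeg F x = 1 ->
  exists C0, [/\ C0 \in F, x \in C0 & forall G, G \in F -> x \in G -> G = C0].
Proof.
move/eqP/cardfs1P => [C0 eqC0].
have : C0 \in [fset C in F | x \in C] by rewrite eqC0 in_fset1.
rewrite in_fset_sep => /andP[C0F xC0]; exists C0; split => // G GF xG.
by apply/eqP; rewrite -in_fset1 -eqC0 in_fset_sep GF.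
Qed.

Lemma singular_lit F v : singular v F ->
  exists b, ldeg F (v, b) = 1 /\ 0 < ldeg F (v, ~~ b).
Proof.
rewrite /singular /pos /neg => sv.
have [e|e] : ldeg F (v, true) = 1 \/ ldeg F (v, false) = 1 by lia.
  by exists true; split => //=; lia.
by exists false; split => //=; lia.
Qed.

Theorem corollary26 (F : clauseset) (v : var) :
  saturated F -> singular v F ->
  (forall x : lit, ldeg (DP v F) x <= ldeg F x) /\
  (forall w : var, w <> v -> singular w F -> singular w (DP v F)).
Proof.
move=> satF /singular_lit[b [/ldeg_eq1_clause[C0 [C0F vb_C0 vb_only]] nvb_gt0]].
have [D0] : exists D0, D0 \in [fset C in F | (v, ~~ b) \in C].
  by apply/fset0Pn; rewrite -cardfs_gt0.
rewrite in_fset_sep => /andP[D0F nvb_D0].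
have le x := ldeg_DP_le satF C0F vb_C0 vb_only x.
have gt0 x := ldeg_DP_gt0 satF C0F vb_C0 vb_only D0F nvb_D0 (x := x).
split=> // w /eqP wv; rewrite /singular => sw.
have := le (pos w); have := le (neg w).
have := gt0 (pos w) wv; have := gt0 (neg w) wv; lia.
Qed.
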